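(* Let $\Sigma$ be the system $\dot{x}=f(x,u)$, $y=h(x,u)$ with supply rate $s$, and let $x^*,x^{**}\in\mathcal{X}$ be two ground states such that $\Sigma$ is reachable from and controllable to each of $x^*$ and $x^{**}$, and $\Sigma$ is cyclo-dissipative with respect to $x^*$ and with respect to $x^{**}$. Denote by $S^*_{ac},S^*_{rc}$ the functions $S_{ac},S_{rc}$ defined with ground state $x^*$, and by $S^{**}_{ac},S^{**}_{rc}$ those defined with ground state $x^{**}$. Then $$S^*_{ac}(x^{**})+S^{**}_{ac}(x^* )\le 0,\qquad S^*_{rc}(x^{**})+S^{**}_{rc}(x^* )\ge 0.$$
   Context: $\Sigma$: $\dot{x}=f(x,u)$, $x\in\mathcal{X}$, $u\in\mathbb{R}^m$, $y=h(x,u)\in\mathbb{R}^p$; supply rate $s:\mathbb{R}^m\times\mathbb{R}^p\to\mathbb{R}$, with integrals of $s$ along solutions well-defined. For a ground state $\bar x$: $S_{ac}(x)=\sup_{u,\,T\ge0\,\mid\,x(0)=x,\,x(T)=\bar x}-\int_0^T s(u(t),y(t))\,dt$ and $S_{rc}(x)=\inf_{u,\,T\ge0\,\mid\,x(-T)=\bar x,\,x(0)=x}\int_{-T}^0 s(u(t),y(t))\,dt$. $\Sigma$ is cyclo-dissipative with respect to $\bar x$ if $\int_0^T s(u(t),y(t))\,dt\ge 0$ for all $T\ge0$ and all inputs such that $x(T)=x(0)=\bar x$. Reachable from $\bar x$: every state reachable from $\bar x$ in finite time; controllable to $\bar x$: $\bar x$ reachable in finite time from every state. *)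

From HB Require Import structures.
From mathcomp Require Import all_boot all_order all_algebra.
From mathcomp Require Import all_classical all_reals all_analysis.
Set Implicit Arguments. Unset Strict Implicit. Unset Printing Implicit Defensive.
Import Order.TTheory GRing.Theory Num.Theory.
Import numFieldNormedType.Exports.
Local Open Scope classical_set_scope.
Local Open Scope ring_scope.

Section System.
Variables (R : realType) (n m p : nat).
Variables (Xs : set 'rV[R]_n) (f : 'rV[R]_n -> 'rV[R]_m -> 'rV[R]_n)
          (h : 'rV[R]_n -> 'rV[R]_m -> 'rV[R]_p) (s : 'rV[R]_m -> 'rV[R]_p -> R).

Let mu := (@lebesgue_measure R).

Definition supply (u : R -> 'rV[R]_m) (x : R -> 'rV[R]_n) (t : R) : R :=
  s (u t) (h (x t) (u t)).

(* x is a (Caratheodory) solution of xdot = f(x,u) on [a,b], staying in X,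
   along which the integral of the supply rate is well defined. *)
Definition solution (u : R -> 'rV[R]_m) (x : R -> 'rV[R]_n) (a b : R) : Prop :=
  a <= b /\
  (forall t, a <= t <= b -> Xs (x t)) /\
  (forall i : 'I_n,
     mu.-integrable `[a, b] (fun t => (f (x t) (u t) ord0 i)%:E) /\
     forall t, a <= t <= b ->
       x t ord0 i = x a ord0 i + \int[mu]_(r in `[a, t]) f (x r) (u r) ord0 i) /\
  mu.-integrable `[a, b] (fun t => (supply u x t)%:E).

Definition supply_int (u : R -> 'rV[R]_m) (x : R -> 'rV[R]_n) (a b : R) : R :=
  \int[mu]_(t in `[a, b]) supply u x t.

Definition S_ac (xb x0 : 'rV[R]_n) : \bar R :=
  ereal_sup [set z : \bar R | exists (u : R -> 'rV[R]_m) (x : R -> 'rV[R]_n) (T : R),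
     0 <= T /\ solution u x 0 T /\ x 0 = x0 /\ x T = xb /\
     z = (- supply_int u x 0 T)%:E].

Definition S_rc (xb x0 : 'rV[R]_n) : \bar R :=
  ereal_inf [set z : \bar R | exists (u : R -> 'rV[R]_m) (x : R -> 'rV[R]_n) (T : R),
     0 <= T /\ solution u x (- T) 0 /\ x (- T) = xb /\ x 0 = x0 /\
     z = (supply_int u x (- T) 0)%:E].

Definition reachable_from (xb : 'rV[R]_n) : Prop :=
  forall x1, Xs x1 -> exists (u : R -> 'rV[R]_m) (x : R -> 'rV[R]_n) (T : R),
     0 <= T /\ solution u x 0 T /\ x 0 = xb /\ x T = x1.

Definition controllable_to (xb : 'rV[R]_n) : Prop :=
  forall x1, Xs x1 -> exists (u : R -> 'rV[R]_m) (x : R -> 'rV[R]_n) (T : R),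
     0 <= T /\ solution u x 0 T /\ x 0 = x1 /\ x T = xb.

Definition cyclo_dissipative (xb : 'rV[R]_n) : Prop :=
  forall (u : R -> 'rV[R]_m) (x : R -> 'rV[R]_n) (T : R),
     0 <= T -> solution u x 0 T -> x 0 = xb -> x T = xb ->
     0 <= supply_int u x 0 T.

End System.

From HB Require Import structures.
From mathcomp Require Import all_boot all_order all_algebra.
From mathcomp Require Import all_classical all_reals all_analysis.
From mathcomp Require Import measurable_realfun lra.

(* Gluing a trajectory from x* to x** to one from x** back to x* yields a
   closed trajectory through x*, whose supply integral is nonnegative by
   cyclo-dissipativity.  So the supply along any path x* -> x** plus the
   supply along any path x** -> x* is nonnegative, which gives both
   inequalities after passing to the supremum of the negated supplies (S_ac)
   and to the infimum of the supplies (S_rc).  Gluing needs the system to be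
   time invariant: translation preserves Lebesgue measure, so trajectories can
   be shifted in time, which also moves the required-supply trajectories on
   [-T, 0] to [0, T]. *)

Set Implicit Arguments.
Unset Strict Implicit.
Unset Printing Implicit Defensive.

Import Order.TTheory GRing.Theory Num.Theory.
Local Open Scope ring_scope.
Local Open Scope classical_set_scope.

Section integrable_union.
Context d (T : measurableType d) (R : realType).
Context (mu : {measure set T -> \bar R}).

Lemma integrable_setU (A B : set T) (f : T -> \bar R) :
  measurable A -> measurable B -> [disjoint A & B] ->
  mu.-integrable A f -> mu.-integrable B f -> mu.-integrable (A `|` B) f.
Proof.
move=> mA mB AB /integrableP[mfA fA] /integrableP[mfB fB].
have mf : measurable_fun (A `|` B) f by exact/measurable_funU.
apply/integrableP; split => //.
rewrite ge0_integral_setU //; first exact: lte_add_pinfty.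
exact: measurableT_comp.
Qed.

End integrable_union.

Section lebesgue_translation.
Context (R : realType).
Local Notation mu := (@lebesgue_measure R).

Lemma measurable_subr (c : R) : measurable_fun setT (fun x : R => x - c).
Proof. by apply: measurable_funB => //; exact: measurable_cst. Qed.

Lemma preimage_subr_itv (c a b : R) (b0 b1 : bool) :
  (fun x => x - c) @^-1` [set` Interval (BSide b0 a) (BSide b1 b)] =
  [set` Interval (BSide b0 (a + c)) (BSide b1 (b + c))].
Proof.
by case: b0 b1 => [] []; apply/seteqP; split => x /=; rewrite !in_itv /=;
  move=> /andP[? ?]; apply/andP; split; lra.
Qed.

Lemma pushforward_subr_lebesgue_measure (c : R) (A : set R) : measurable A ->
  pushforward mu ((fun x => x - c) : R -> measurableTypeR R) A = mu A.
Proof.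
move=> mA; apply/esym/lebesgue_measure_unique => //=.
  exact: measurable_subr.
move=> _ _ [[a b]] _ <-.
rewrite /pushforward preimage_subr_itv !lebesgue_measure_itv /= !lte_fin ltrD2r.
by case: ifP => // _; congr (_%:E); lra.
Qed.

Lemma ge0_integral_subr (c : R) (D : set R) (g : R -> \bar R) :
  measurable D -> measurable_fun D g -> (forall x, D x -> (0 <= g x)%E) ->
  (\int[mu]_(x in D) g x =
   \int[mu]_(x in (fun x => x - c)%R @^-1` D) g (x - c)%R)%E.
Proof.
move=> mD mg g0.
pose phi : R -> measurableTypeR R := fun x => x - c.
transitivity (\int[pushforward mu phi]_(x in D) g x)%E.
  apply: eq_measure_integral; first exact: measurable_subr.
  by move=> mphi A mA _; exact/esym/pushforward_subr_lebesgue_measure.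
rewrite ge0_integral_pushforward //; first exact: measurable_subr.
by move=> y /set_mem; exact: g0.
Qed.

Lemma measurable_fun_subr (c : R) (D : set R) (g : R -> \bar R) :
  measurable D -> measurable_fun D g ->
  measurable_fun ((fun x => x - c) @^-1` D) (fun x => g (x - c)).
Proof.
move=> mD mg; apply: (measurable_comp mD _ mg); first by move=> _ [x Dx <-].
exact: measurable_funS (measurable_subr c).
Qed.

Lemma integral_subr (c : R) (D : set R) (g : R -> \bar R) :
  measurable D -> measurable_fun D g ->
  (\int[mu]_(x in D) g x =
   \int[mu]_(x in (fun x => x - c)%R @^-1` D) g (x - c)%R)%E.
Proof.
move=> mD mg; rewrite integralE [RHS]integralE.
rewrite (ge0_integral_subr c mD (measurable_funepos mg)) //.
rewrite (ge0_integral_subr c mD (measurable_funeneg mg)) //.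
by rewrite [in RHS](funepos_comp g (fun x => x - c))
  [in RHS](funeneg_comp g (fun x => x - c)).
Qed.

Lemma integrable_subr (c : R) (D : set R) (g : R -> \bar R) :
  measurable D -> mu.-integrable D g ->
  mu.-integrable ((fun x => x - c) @^-1` D) (fun x => g (x - c)).
Proof.
move=> mD /integrableP[mg ig]; apply/integrableP; split.
  exact: measurable_fun_subr.
rewrite -(@ge0_integral_subr c D (fun x => `|g x|)%E mD) //.
exact: measurableT_comp.
Qed.

Lemma integrable_itv_subr (c a b : R) (F : R -> R) :
  mu.-integrable `[a, b] (EFin \o F) ->
  mu.-integrable `[a + c, b + c] (EFin \o (fun t => F (t - c))).
Proof. by rewrite -preimage_subr_itv; exact: integrable_subr. Qed.

Lemma Rintegral_itv_subr (c a b : R) (F : R -> R) :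
  mu.-integrable `[a, b] (EFin \o F) ->
  \int[mu]_(t in `[a + c, b + c]) F (t - c) = \int[mu]_(t in `[a, b]) F t.
Proof.
case/integrableP => mF _.
by rewrite /Rintegral -preimage_subr_itv -(integral_subr c _ mF).
Qed.

End lebesgue_translation.

Section glue.
Context (R : realType).
Local Notation mu := (@lebesgue_measure R).

Definition glue {T : Type} (b : R) (g1 g2 : R -> T) : R -> T :=
  fun t => if t <= b then g1 t else g2 t.

Lemma glueL (T : Type) (b t : R) (g1 g2 : R -> T) :
  t <= b -> glue b g1 g2 t = g1 t.
Proof. by rewrite /glue => ->. Qed.

Lemma glueR (T : Type) (b t : R) (g1 g2 : R -> T) :
  b < t -> glue b g1 g2 t = g2 t.
Proof. by rewrite /glue leNgt => ->. Qed.

Lemma glue_comp (T U : Type) (G : T -> U) (b t : R) (g1 g2 : R -> T) :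
  G (glue b g1 g2 t) = glue b (G \o g1) (G \o g2) t.
Proof. by rewrite /glue; case: ifP. Qed.

Lemma glue_comp2 (T1 T2 U : Type) (G : T1 -> T2 -> U) (b t : R)
    (g1 g2 : R -> T1) (k1 k2 : R -> T2) :
  G (glue b g1 g2 t) (glue b k1 k2 t) =
  glue b (fun r => G (g1 r) (k1 r)) (fun r => G (g2 r) (k2 r)) t.
Proof. by rewrite /glue; case: ifP. Qed.

Lemma glue_at_end (T : Type) (b c : R) (g1 g2 : R -> T) :
  b <= c -> g1 b = g2 b -> glue b g1 g2 c = g2 c.
Proof.
rewrite /glue le_eqVlt => /predU1P[<- ->|bc _]; first by case: ifP.
by rewrite leNgt bc.
Qed.

Lemma itv_cc_setU (a b c : R) : a <= b -> b <= c ->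
  `[a, c] = `[a, b] `|` `]b, c].
Proof. by move=> ab bc; apply: itv_bndbnd_setU; rewrite bnd_simp. Qed.

Lemma disj_itv_cc_oc (a b c : R) : [disjoint `[a, b] & `]b, c]].
Proof.
apply/disj_setPS => x [] /=; rewrite !in_itv /= => /andP[_ xb] /andP[bx _].
by move: (lt_le_trans bx xb); rewrite ltxx.
Qed.

Section glue_integral.
Variables (a b c : R) (F1 F2 : R -> R).
Hypotheses (ab : a <= b) (bc : b <= c).
Hypotheses (iF1 : mu.-integrable `[a, b] (EFin \o F1))
  (iF2 : mu.-integrable `[b, c] (EFin \o F2)).

Let iF2' : mu.-integrable `]b, c] (EFin \o F2).
Proof.
by apply: integrableS iF2 => //; apply: subset_itv; rewrite bnd_simp.
Qed.

Lemma integrable_glue : mu.-integrable `[a, c] (EFin \o glue b F1 F2).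
Proof.
rewrite (itv_cc_setU ab bc); apply: integrable_setU => //.
- exact: disj_itv_cc_oc.
- apply: eq_integrable iF1 => // t; rewrite inE /= in_itv /= => /andP[_ tb].
  by rewrite /= glueL.
- apply: eq_integrable iF2' => // t; rewrite inE /= in_itv /= => /andP[bt _].
  by rewrite /= glueR.
Qed.

Lemma Rintegral_glue : \int[mu]_(t in `[a, c]) glue b F1 F2 t =
  \int[mu]_(t in `[a, b]) F1 t + \int[mu]_(t in `[b, c]) F2 t.
Proof.
have iF := integrable_glue; rewrite (itv_cc_setU ab bc) in iF *.
rewrite Rintegral_setU //; last exact: disj_itv_cc_oc.
congr (_ + _).
  apply: eq_Rintegral => t; rewrite inE /= in_itv /= => /andP[_ tb].
  by rewrite glueL.
rewrite -Rintegral_itv_obnd_cbnd //.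
apply: eq_Rintegral => t; rewrite inE /= in_itv /= => /andP[bt _].
by rewrite glueR.
Qed.

End glue_integral.

Lemma glue_primitive (a b c : R) (y1 y2 g1 g2 : R -> R) :
  a <= b -> mu.-integrable `[a, b] (EFin \o g1) ->
  mu.-integrable `[b, c] (EFin \o g2) ->
  (forall t, a <= t <= b -> y1 t = y1 a + \int[mu]_(r in `[a, t]) g1 r) ->
  (forall t, b <= t <= c -> y2 t = y2 b + \int[mu]_(r in `[b, t]) g2 r) ->
  y1 b = y2 b ->
  forall t, a <= t <= c ->
    glue b y1 y2 t = glue b y1 y2 a + \int[mu]_(r in `[a, t]) glue b g1 g2 r.
Proof.
move=> ab ig1 ig2 y1E y2E y12 t /andP[ta tc]; rewrite (glueL _ _ ab).
have [tb|bt] := leP t b.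
  rewrite glueL // y1E ?ta //; congr (_ + _).
  apply: eq_Rintegral => r; rewrite inE /= in_itv /= => /andP[_ rt].
  by rewrite glueL // (le_trans rt tb).
have ig2t : mu.-integrable `[b, t] (EFin \o g2).
  by apply: integrableS ig2 => //; apply: subset_itv; rewrite bnd_simp.
rewrite glueR // Rintegral_glue // ?ltW // y2E ?tc ?(ltW bt) //.
by rewrite -y12 y1E ?ab ?lexx // addrA.
Qed.

End glue.

Section ereal_sup_inf.
Context (R : realType).
Local Open Scope ereal_scope.

Lemma ereal_supD_le0 (A B : set (\bar R)) :
  (forall a b, A a -> B b -> a + b <= 0) -> ereal_sup A + ereal_sup B <= 0.
Proof.
move=> AB; rewrite -[ereal_sup B]oppeK sube_le0.
apply: ge_ereal_sup => a Aa; rewrite leeNr.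
apply: ge_ereal_sup => b Bb; rewrite leeNr -sube_le0 oppeK.
exact: AB.
Qed.

Lemma ereal_infD_ge0 (A B : set (\bar R)) (a0 b0 : \bar R) :
  A a0 -> a0 < +oo -> B b0 -> b0 < +oo ->
  (forall a b, A a -> B b -> 0 <= a + b) -> 0 <= ereal_inf A + ereal_inf B.
Proof.
(* Without the witnesses, an empty A would give +oo + -oo = -oo. *)
move=> Aa0 a0oo Bb0 b0oo AB.
have lbA b : B b -> - b <= ereal_inf A.
  move=> Bb; apply: le_ereal_inf_tmp => a Aa; move: (AB a b Aa Bb).
  case: a b {Aa Bb} => [a| |] [b| |] //=; rewrite ?leNye ?leey //.
  by rewrite -EFinD !lee_fin; lra.
have infA_fin : ereal_inf A \is a fin_num.
  rewrite fin_numElt (le_lt_trans (ereal_inf_lbound Aa0) a0oo) andbT.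
  by apply: lt_le_trans (lbA _ Bb0); rewrite lteNr.
rewrite -(subee infA_fin); apply: leeD2l.
by apply: le_ereal_inf_tmp => b Bb; rewrite leeNl; exact: lbA.
Qed.

End ereal_sup_inf.

Section trajectories.
Variables (R : realType) (n m p : nat) (Xs : set 'rV[R]_n)
  (f : 'rV[R]_n -> 'rV[R]_m -> 'rV[R]_n) (h : 'rV[R]_n -> 'rV[R]_m -> 'rV[R]_p)
  (s : 'rV[R]_m -> 'rV[R]_p -> R).
Local Notation mu := (@lebesgue_measure R).
Local Notation sol := (solution Xs f h s).
Local Notation sint := (supply_int h s).

Lemma solution_subr u x (a b c : R) : sol u x a b ->
  sol (fun t => u (t - c)) (fun t => x (t - c)) (a + c) (b + c).
Proof.
move=> [ab [inX [eqx isupply]]]; split; first by rewrite lerD2r.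
split; first by move=> t /andP[? ?]; apply: inX; apply/andP; split; lra.
split; last exact: (integrable_itv_subr c isupply).
move=> i; have [ifi xE] := eqx i.
split; first exact: (integrable_itv_subr c ifi).
move=> t /andP[ta tb]; rewrite /= addrK xE; last by apply/andP; split; lra.
have ifit : mu.-integrable `[a, t - c] (fun r => (f (x r) (u r) ord0 i)%:E).
  by apply: integrableS ifi => //; apply: subset_itv; rewrite bnd_simp; lra.
by rewrite -(Rintegral_itv_subr c ifit) subrK.
Qed.

Lemma supply_int_subr u x (a b c : R) : sol u x a b ->
  sint (fun t => u (t - c)) (fun t => x (t - c)) (a + c) (b + c) = sint u x a b.
Proof.
by move=> [_ [_ [_ isupply]]]; exact: (Rintegral_itv_subr c isupply).
Qed.

Lemma solution_glue u1 x1 u2 x2 (a b c : R) :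
  sol u1 x1 a b -> sol u2 x2 b c -> x1 b = x2 b ->
  sol (glue b u1 u2) (glue b x1 x2) a c.
Proof.
move=> [ab [inX1 [eqx1 is1]]] [bc [inX2 [eqx2 is2]]] x12.
split; first exact: le_trans bc.
split.
  move=> t /andP[ta tc]; have [tb|bt] := leP t b.
    by rewrite glueL //; apply: inX1; rewrite ta tb.
  by rewrite glueR //; apply: inX2; rewrite tc ltW.
split; last first.
  apply: eq_integrable (integrable_glue ab bc is1 is2) => // t _.
  by rewrite /= /supply (glue_comp2 (fun x v => s v (h x v))).
move=> i; have [if1 x1E] := eqx1 i; have [if2 x2E] := eqx2 i.
split.
  apply: eq_integrable (integrable_glue ab bc if1 if2) => // t _.
  by rewrite /= (glue_comp2 (fun x v => f x v ord0 i)).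
move=> t tac; rewrite !(glue_comp (fun x : 'rV[R]_n => x ord0 i)).
under eq_Rintegral do rewrite (glue_comp2 (fun x v => f x v ord0 i)).
by apply: (glue_primitive ab if1 if2 x1E x2E); rewrite ?x12.
Qed.

Lemma supply_int_glue u1 x1 u2 x2 (a b c : R) :
  sol u1 x1 a b -> sol u2 x2 b c ->
  sint (glue b u1 u2) (glue b x1 x2) a c = sint u1 x1 a b + sint u2 x2 b c.
Proof.
move=> [ab [_ [_ is1]]] [bc [_ [_ is2]]].
rewrite /supply_int -(Rintegral_glue ab bc is1 is2).
apply: eq_Rintegral => t _.
by rewrite /supply (glue_comp2 (fun x v => s v (h x v))).
Qed.

Definition path_supply (x0 x1 : 'rV[R]_n) : set R :=
  [set r | exists u x T, 0 <= T /\ sol u x 0 T /\ x 0 = x0 /\ x T = x1 /\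
     r = sint u x 0 T].

Lemma S_acE (xb x0 : 'rV[R]_n) :
  S_ac Xs f h s xb x0 = ereal_sup [set (- r)%:E | r in path_supply x0 xb].
Proof.
congr ereal_sup; apply/seteqP; split.
  by move=> _ [u [x [T [T0 [sx [x0E [xTE ->]]]]]]]; exists (sint u x 0 T);
    first by exists u, x, T.
by move=> _ [_ [u [x [T [T0 [sx [x0E [xTE ->]]]]]]] <-]; exists u, x, T.
Qed.

Lemma S_rcE (xb x0 : 'rV[R]_n) :
  S_rc Xs f h s xb x0 = ereal_inf [set r%:E | r in path_supply xb x0].
Proof.
congr ereal_inf; apply/seteqP; split.
  move=> _ [u [x [T [T0 [sx [xTE [x0E ->]]]]]]].
  have := solution_subr T sx; have := supply_int_subr T sx; rewrite addNr add0r.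
  move=> <- sx'.
  exists (sint (fun t => u (t - T)) (fun t => x (t - T)) 0 T) => //.
  by exists (fun t => u (t - T)), (fun t => x (t - T)), T; rewrite sub0r subrr.
move=> _ [_ [u [x [T [T0 [sx [x0E [xTE ->]]]]]]] <-].
have := solution_subr (- T) sx; have := supply_int_subr (- T) sx.
rewrite add0r addrN opprK => <- sx' /=.
by exists (fun t => u (t + T)), (fun t => x (t + T)), T; rewrite addNr add0r.
Qed.

Lemma reachable_path_supply (X Y : 'rV[R]_n) :
  reachable_from Xs f h s X -> Xs Y -> exists r, path_supply X Y r.
Proof.
move=> reachX /reachX[u [x [T [? [? [? ?]]]]]].
by exists (sint u x 0 T), u, x, T.
Qed.

Lemma path_supply_cycle_ge0 (X Y : 'rV[R]_n) (r1 r2 : R) :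
  cyclo_dissipative Xs f h s X -> path_supply X Y r1 -> path_supply Y X r2 ->
  0 <= r1 + r2.
Proof.
move=> CD [u1 [x1 [T1 [T1ge0 [s1 [x10 [x1T ->]]]]]]]
  [u2 [x2 [T2 [T2ge0 [s2 [x20 [x2T ->]]]]]]].
have s2' := solution_subr T1 s2; rewrite add0r in s2'.
have x12 : x1 T1 = x2 (T1 - T1) by rewrite subrr x20.
rewrite -(supply_int_subr T1 s2) add0r -(supply_int_glue s1 s2').
apply: CD (solution_glue s1 s2' x12) _ _; first exact: addr_ge0.
  by rewrite glueL.
by rewrite glue_at_end ?lerDr // addrK.
Qed.

End trajectories.

Theorem proposition3 (R : realType) (n m p : nat) (Xs : set 'rV[R]_n)
  (f : 'rV[R]_n -> 'rV[R]_m -> 'rV[R]_n) (h : 'rV[R]_n -> 'rV[R]_m -> 'rV[R]_p)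
  (s : 'rV[R]_m -> 'rV[R]_p -> R) (xs xss : 'rV[R]_n) :
  Xs xs -> Xs xss ->
  reachable_from Xs f h s xs -> controllable_to Xs f h s xs ->
  reachable_from Xs f h s xss -> controllable_to Xs f h s xss ->
  cyclo_dissipative Xs f h s xs -> cyclo_dissipative Xs f h s xss ->
  (S_ac Xs f h s xs xss + S_ac Xs f h s xss xs <= 0)%E /\
  (S_rc Xs f h s xs xss + S_rc Xs f h s xss xs >= 0)%E.
Proof.
move=> Xxs Xxss reach_xs _ reach_xss _ cd_xs _.
rewrite !S_acE !S_rcE; split.
  apply: ereal_supD_le0 => _ _ [a Pa <-] [b Pb <-].
  rewrite -EFinD lee_fin -opprD oppr_le0 addrC.
  exact: path_supply_cycle_ge0 cd_xs Pb Pa.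
have [r1 P1] := reachable_path_supply reach_xs Xxss.
have [r2 P2] := reachable_path_supply reach_xss Xxs.
apply: (@ereal_infD_ge0 _ _ _ r1%:E r2%:E); rewrite ?ltry //;
  [exists r1 | exists r2 |] => //.
move=> _ _ [a Pa <-] [b Pb <-]; rewrite -EFinD lee_fin.
exact: path_supply_cycle_ge0 cd_xs Pa Pb.
Qed.
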